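(* Given $F\in \mathcal{G}_{N}^{dif}(A)$ with coefficients $f_{u}^{i}$, the left substitutional inverse of $F$ (i.e. the series $G$ with $G\circ F=(z_{1},\ldots,z_{N})$) is the power series $G(z)$ with coefficients $g_{v}^{j}=\langle S_{\mathcal{L}}(Y_{v}^{j}),F\rangle$, where $S_{\mathcal{L}}=\mathbf{s}S_{\mathcal{H}}\mathbf{s}$ is the antipode of the left Lagrange Hopf algebra $\mathcal{L}^{N}$. The right substitutional inverse of $F$ (i.e. the series $H$ with $F\circ H=(z_{1},\ldots,z_{N})$) is the power series $H(z)$ with coefficients $h_{v}^{j}=\langle S_{\mathcal{R}}(Y_{v}^{j}),F\rangle$, where $S_{\mathcal{R}}=\mathbf{t}S_{\mathcal{H}}\mathbf{t}$ is the antipode of the right Lagrange Hopf algebra $\mathcal{R}^{N}$.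
   Context: Let $A$ be a non-commutative unital algebra and $z_{1},\ldots,z_{N}$ non-commuting variables commuting with elements of $A$; for a word $w=w(1)\cdots w(p)$ in the free monoid on $\langle N\rangle=\{1,\ldots,N\}$ put $z_{w}=z_{w(1)}\cdots z_{w(p)}$. $\mathcal{G}_{N}^{dif}(A)$ is the set of $N$-tuples $F=(F^{1},\ldots,F^{N})$ of formal power series $F^{j}(z)=z_{j}+\sum_{|u|\geq 2}f_{u}^{j}z_{u}$ with $f_{u}^{j}\in A$. For $F,G\in\mathcal{G}_{N}^{dif}(A)$, $F\circ G$ denotes substitution of $G^{j}$ for $z_{j}$ in each $F^{i}$; its coefficients are $(F\circ G)_{u}^{i}=\sum f_{w}^{i}g_{u|C_{1}}^{w(1)}\cdots g_{u|C_{q}}^{w(q)}$, summed over all colored interval (ordered) partitions $((C_{1},\ldots,C_{q}),w(1)\cdots w(q))$, $1\le q\le p$, of the colored set $([p],u(1)\cdots u(p))$ (with $f_{j}^{i}=\delta_{ij}$). $\mathcal{H}=\mathcal{H}^{N}$ is the incidence Hopf algebra of $N$-colored interval partitions: as an algebra it is free on generators $Y_{u}^{i}$ ($1\le i\le N$, $|u|\ge 2$), with $Y_{j}^{i}=\delta_{ij}1$, coproduct $\Delta(Y_{u}^{i})=\sum Y_{u|C_{1}}^{v(1)}\cdots Y_{u|C_{q}}^{v(q)}\otimes Y_{v}^{i}$ (sum over colored interval partitions $((C_{1},\ldots,C_{q}),v)$ of $([|u|],u)$), counit $\varepsilon(Y_{u}^{i})=0$ for $|u|\ge2$, and antipode $S_{\mathcal{H}}$.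 $\mathbf{s}$ is the algebra anti-automorphism of $\mathcal{H}$ with $\mathbf{s}(Y_{u}^{i})=Y_{u^{*}}^{i}$ ($u^{*}$ the reversed word), and $\mathbf{t}$ is the algebra anti-automorphism with $\mathbf{t}(Y_{u}^{i})=Y_{u}^{i}$. The left Lagrange Hopf algebra $\mathcal{L}^{N}$ is $\mathcal{H}^{N}$ with coproduct $\Delta^{op}$ and antipode $S_{\mathcal{H}}^{-1}=\mathbf{s}S_{\mathcal{H}}\mathbf{s}$; the right Lagrange Hopf algebra $\mathcal{R}^{N}$ is the $\mathbf{t}$-transformed Hopf algebra with antipode $\mathbf{t}S_{\mathcal{H}}\mathbf{t}$. The pairing $\langle\,,\rangle:\mathcal{L}^{N}\times\mathcal{G}_{N}^{dif}(A)\to A$ is the bilinear map determined by $\langle Y_{u_{1}}^{i_{1}}\cdots Y_{u_{q}}^{i_{q}},F\rangle=f_{u_{1}}^{i_{1}}\cdots f_{u_{q}}^{i_{q}}$ (and $\langle 1,F\rangle=1$); it satisfies $\langle Y_{u}^{i},F\circ G\rangle=m_{A}\langle\Delta^{op}(Y_{u}^{i}),F\otimes G\rangle$. *)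

From mathcomp Require Import all_boot all_order all_algebra.
Set Implicit Arguments. Unset Strict Implicit. Unset Printing Implicit Defensive.
Import GRing.Theory.
Local Open Scope ring_scope.

Section Lagrange.
Variable N : nat.

Definition word := seq 'I_N.

(* all ways to cut a word into nonempty consecutive blocks (u|C_1,...,u|C_q) *)
Fixpoint splits (u : word) : seq (seq word) :=
  match u with
  | [::] => [:: [::]]
  | x :: u' =>
      flatten [seq (match s with
                    | [::] => [:: [:: [:: x]]]
                    | b :: s' => [:: [:: x] :: b :: s'; (x :: b) :: s']
                    end) | s <- splits u']
  end.

Fixpoint colorings (q : nat) : seq word :=
  match q with
  | 0 => [:: [::]]
  | q'.+1 => [seq c :: w | c <- ord_enum N, w <- colorings q']
  end.

(* colored interval partitions ((C_1..C_q), w(1)..w(q)) of ([|u|], u),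
   given as (list of restricted words u|C_k, colouring w) *)
Definition cips (u : word) : seq (seq word * word) :=
  [seq (bl, w) | bl <- splits u, w <- colorings (size bl)].

Variable A : pzRingType.

(* a tuple of series F = (F^1..F^N) is given by its coefficients F i u = f_u^i *)
Definition series := 'I_N -> word -> A.

Definition in_Gdif (F : series) : Prop :=
  forall i (u : word), (size u <= 1)%N -> F i u = (u == [:: i])%:R.

Definition id_series : series := fun i u => (u == [:: i])%:R.

Definition subst (F G : series) : series := fun i u =>
  \sum_(c <- cips u) F i c.2 * \prod_(p <- zip c.2 c.1) G p.1 p.2.

(* generator Y_u^i is the pair (i,u); a monomial is a list of generators
   (the product in that order); an element is a formal Z-combination of
   monomials.  Generators Y_j^i with |j| = 1 are kept unreduced; they stand
   for delta_ij 1, which is how the pairing evaluates them. *)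
Definition gen := ('I_N * word)%type.
Definition monom := seq gen.
Definition H := seq (int * monom).

Definition Hone : H := [:: (1%:Z, [::])].
Definition Y (i : 'I_N) (u : word) : H := [:: (1%:Z, [:: (i, u)])].
Definition Hopp (x : H) : H := [seq (- m.1, m.2) | m <- x].
Definition Hmul (x y : H) : H :=
  [seq (m.1 * n.1, m.2 ++ n.2) | m <- x, n <- y].
Definition Hprod (xs : seq H) : H := foldr Hmul Hone xs.

Definition pairing (x : H) (F : series) : A :=
  \sum_(m <- x) (\prod_(g <- m.2) F g.1 g.2) *~ m.1.

(* antipode S_H on generators, determined by m (S (x) id) Delta = eta eps:
   S(Y_u^i) = - sum over colored interval partitions ((C_1..C_q),v) with
   q >= 2 of S(Y_{u|C_1}^{v(1)} ... Y_{u|C_q}^{v(q)}) Y_v^i,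
   where S is an anti-homomorphism; S(Y_j^i) = Y_j^i (= delta_ij 1).
   The fuel argument is set to |u|, which suffices. *)
Fixpoint Sgen (fuel : nat) (i : 'I_N) (u : word) : H :=
  match fuel with
  | 0 => Y i u
  | fuel'.+1 =>
      if (size u <= 1)%N then Y i u
      else Hopp (flatten
        [seq Hmul (Hprod (rev [seq Sgen fuel' p.1 p.2 | p <- zip c.2 c.1]))
                  (Y i c.2)
        | c <- cips u & (2 <= size c.1)%N])
  end.

Definition S_gen (g : gen) : H := Sgen (size g.2) g.1 g.2.

Definition S_H (x : H) : H :=
  flatten [seq Hmul [:: (m.1, [::])] (Hprod (rev (map S_gen m.2))) | m <- x].

Definition s_map (x : H) : H :=
  [seq (m.1, rev [seq (g.1, rev g.2) | g <- m.2]) | m <- x].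
Definition t_map (x : H) : H := [seq (m.1, rev m.2) | m <- x].

Definition S_L (x : H) : H := s_map (S_H (s_map x)).
Definition S_R (x : H) : H := t_map (S_H (t_map x)).

Definition left_inv (F : series) : series := fun j v =>
  if (2 <= size v)%N then pairing (S_L (Y j v)) F else (v == [:: j])%:R.
Definition right_inv (F : series) : series := fun j v =>
  if (2 <= size v)%N then pairing (S_R (Y j v)) F else (v == [:: j])%:R.

End Lagrange.

From mathcomp Require Import all_boot all_order all_algebra.
Set Implicit Arguments. Unset Strict Implicit. Unset Printing Implicit Defensive.
Import GRing.Theory.

(* By the defining recursion of the antipode, the numbers <S_R(Y_u^i), F>
   (the pairing twisted by the anti-automorphism t) satisfy exactly the
   recursion that solves F o H = id coefficient by coefficient, and both
   one-sided inverses are unique by induction on the length of words.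
   Twisting by s instead reverses all words, so <S_L(Y_u^i), F> is the right
   inverse R of the reversed series F*, read on reversed words.  It remains
   to see that F* o R = id forces R* o F = id although A is not commutative.
   For this, sum over pairs (c1, c2) where c2 is a coloured interval
   partition of the colouring of c1: by induction on the length this sum is
   (R* o F)(rev u) + R(u), while regrouping the pairs as a partition of u
   together with a partition of each of its blocks makes every inner sum a
   coefficient of F* o R, i.e. a central 0 or 1, and the sum collapses to
   R(u). *)

Lemma mem_zip_snd (S T : eqType) (s : seq S) (t : seq T) p : p \in zip s t -> p.2 \in t.
Proof.
elim: s t => [|x s IHs] [|y t] //=; rewrite !in_cons => /orP [/eqP -> /=|/IHs ->].
  by rewrite eqxx.
by rewrite orbT.
Qed.

Lemma zip_mapr (S T T' : Type) (f : T -> T') (s : seq S) (t : seq T) :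
  zip s (map f t) = [seq (p.1, f p.2) | p <- zip s t].
Proof. by elim: s t => [|x s IHs] [|y t] //=; rewrite IHs. Qed.

Lemma flatten_flatten (T : Type) (sss : seq (seq (seq T))) :
  flatten (flatten sss) = flatten (map flatten sss).
Proof. by elim: sss => //= ss sss IHsss; rewrite flatten_cat IHsss. Qed.

Lemma notin_flatten (T : eqType) (x : T) (ss : seq (seq T)) :
  (x \notin flatten ss) = all (fun s => x \notin s) ss.
Proof. by elim: ss => //= s ss IHss; rewrite mem_cat negb_or IHss. Qed.

Notation cip N := (seq (word N) * word N)%type.

Section ColoredIntervalPartitions.
Variable N : nat.
Implicit Types (x : 'I_N) (u w b : word N) (bl : seq (word N)) (c : cip N).

Definition cons_split x bl : seq (seq (word N)) :=
  if bl is b :: bl' then [:: [:: x] :: b :: bl'; (x :: b) :: bl']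
  else [:: [:: [:: x]]].

Lemma splits_cons x u :
  splits (x :: u) = flatten [seq cons_split x bl | bl <- splits u].
Proof. by []. Qed.

Lemma mem_splits u bl : (bl \in splits u) = (flatten bl == u) && ([::] \notin bl).
Proof.
elim: u bl => [|x u IHu] bl.
  by case: bl => [|[|y b] bl]; rewrite ?inE ?eqxx ?andbF.
rewrite splits_cons; apply/flatten_mapP/idP => [[bl' bl'_split]|].
  move: bl'_split; rewrite IHu => /andP [/eqP <- nil_bl'].
  case: bl' nil_bl' => [|b bl'] nil_bl'; first by rewrite /= inE => /eqP ->; rewrite /= eqxx.
  by rewrite /= !inE => /orP [] /eqP -> /=; move: nil_bl'; rewrite !inE eqxx /= => // /norP [].
case: bl => [|[|y b] bl] //; first by rewrite in_cons eqxx andbF.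
move=> /andP [/eqP [-> flat_bl]]; rewrite in_cons negb_or => /andP [_ nil_bl].
case: b flat_bl => [|z b] flat_bl.
  exists bl; first by rewrite IHu -flat_bl eqxx.
  by case: bl nil_bl {flat_bl} => [|b bl] _; rewrite !inE eqxx.
exists ((z :: b) :: bl); first by rewrite IHu -flat_bl eqxx in_cons.
by rewrite !inE eqxx orbT.
Qed.

Definition uncons_split (bl : seq (word N)) : seq (word N) :=
  if bl is b :: bl' then (if behead b is [::] then bl' else behead b :: bl')
  else [::].

Lemma cons_splitK x bl bl' :
  [::] \notin bl -> bl' \in cons_split x bl -> uncons_split bl' = bl.
Proof.
case: bl => [|b bl] /=; first by rewrite inE => _ /eqP ->.
rewrite inE negb_or eq_sym => /andP [b_nil _].
by rewrite !inE => /orP [] /eqP -> //=; case: b b_nil.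
Qed.

Lemma uniq_cons_split x bl : uniq (cons_split x bl).
Proof.
case: bl => [|b bl] //=; rewrite inE andbT.
by apply/eqP => /(congr1 size) /= /eqP; rewrite eqSS gtn_eqF.
Qed.

Lemma uniq_splits u : uniq (splits u).
Proof.
elim: u => [|x u IHu] //; rewrite splits_cons.
have : all (fun bl => [::] \notin bl) (splits u).
  by apply/allP => bl; rewrite mem_splits => /andP [].
elim: (splits u) IHu => [|bl bls IHbls] //= /andP [bl_new uniq_bls] /andP [nil_bl nil_bls].
rewrite cat_uniq uniq_cons_split IHbls // andbT.
apply/hasP => -[t /flatten_mapP [bl' bl'_in t_in] t_in'].
move: bl_new; rewrite -(cons_splitK nil_bl t_in').
by rewrite (cons_splitK (allP nil_bls _ bl'_in) t_in) bl'_in.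
Qed.

Lemma mem_colorings q w : (w \in colorings N q) = (size w == q).
Proof.
elim: q w => [|q IHq] [|y w]; rewrite ?inE //=.
  by apply/allpairsP => -[[? ?] [_ _ /=]].
apply/allpairsP; rewrite eqSS -IHq.
case w_in: (w \in colorings N q); first by exists (y, w); rewrite mem_ord_enum.
by move=> [[y' w'] [_ /= w'_in [_ w_eq]]]; rewrite w_eq w'_in in w_in.
Qed.

Lemma uniq_colorings q : uniq (colorings N q).
Proof.
elim: q => [|q IHq] //=; apply: allpairs_uniq => //; first exact: ord_enum_uniq.
by move=> [? ?] [? ?] _ _ [-> ->].
Qed.

Lemma mem_cips u c :
  (c \in cips u) = [&& flatten c.1 == u, [::] \notin c.1 & size c.2 == size c.1].
Proof.
case: c => bl w /=; apply/allpairsPdep/idP => [[bl' [w' [bl'_in w'_in [-> ->]]]]|].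
  by move: bl'_in w'_in; rewrite mem_splits mem_colorings => /andP [-> ->].
by move=> /and3P [flat nil_bl sz]; exists bl, w; rewrite mem_splits mem_colorings flat.
Qed.

Lemma uniq_cips u : uniq (cips u).
Proof.
apply: allpairs_uniq_dep => [||[? ?] [? ?] _ _ [-> ->]] //; first exact: uniq_splits.
by move=> bl _; apply: uniq_colorings.
Qed.

Definition singletons u : seq (word N) := [seq [:: x] | x <- u].

Lemma size_blocks_le bl : [::] \notin bl -> size bl <= size (flatten bl).
Proof.
elim: bl => //= b bl IHbl; rewrite in_cons negb_or size_cat => /andP [].
by case: b => // y b _ /IHbl; rewrite addSn ltnS => /leq_trans; apply; rewrite leq_addl.
Qed.

Lemma blocks_singletons bl :
  [::] \notin bl -> size (flatten bl) <= size bl -> bl = singletons (flatten bl).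
Proof.
elim: bl => //= b bl IHbl; rewrite in_cons negb_or => /andP [].
case: b => [|y [|z b]] // _ nil_bl; first by rewrite ltnS => /(IHbl nil_bl) {1}->.
rewrite /= !ltnS size_cat => /(leq_ltn_trans (leq_addl _ _)).
by rewrite ltnNge size_blocks_le.
Qed.

Lemma size_block_le b bl : b \in bl -> size b <= size (flatten bl).
Proof.
elim: bl => //= b' bl IHbl; rewrite in_cons size_cat => /orP [/eqP ->|/IHbl].
  exact: leq_addr.
by move/leq_trans; apply; rewrite leq_addl.
Qed.

Lemma size_block_lt b bl :
  [::] \notin bl -> 1 < size bl -> b \in bl -> size b < size (flatten bl).
Proof.
case: bl => //= b' bl; rewrite in_cons negb_or size_cat => /andP [b'_nil nil_bl] bl_gt0.
case/orP => [/eqP ->|b_in].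
  by rewrite -[X in X < _]addn0 ltn_add2l (leq_trans _ (size_blocks_le nil_bl)).
case: b' b'_nil => // y b' _; rewrite addSn ltnS.
exact: leq_trans (size_block_le b_in) (leq_addl _ _).
Qed.

Lemma singletons_in_cips u : (singletons u, u) \in cips u.
Proof.
rewrite mem_cips /singletons size_map eqxx andbT flatten_seq1 eqxx /=.
by apply/mapP => -[].
Qed.

Lemma whole_in_cips u i : u != [::] -> ([:: u], [:: i]) \in cips u.
Proof. by rewrite mem_cips /= cats0 eqxx inE eq_sym => ->. Qed.

Lemma cips_size_colors u c : c \in cips u -> size c.2 = size c.1.
Proof. by rewrite mem_cips => /and3P [_ _ /eqP]. Qed.

Lemma cips_size_blocks u c : c \in cips u -> size c.1 <= size u.
Proof. by rewrite mem_cips => /and3P [/eqP <- /size_blocks_le]. Qed.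

Lemma cips_finest u c : c \in cips u -> size u <= size c.1 -> c.1 = singletons u.
Proof. by rewrite mem_cips => /and3P [/eqP <- /blocks_singletons]. Qed.

Lemma cips_coarsest u c : c \in cips u -> size c.1 = 1 -> c.1 = [:: u].
Proof.
by rewrite mem_cips => /and3P [/eqP <- _ _]; case: c.1 => [|b []] //= _; rewrite cats0.
Qed.

Lemma cips_one_color u c i : c \in cips u -> c.2 = [:: i] -> c = ([:: u], [:: i]).
Proof.
case: c => bl w c_in /= w_eq; have := cips_size_colors c_in; rewrite w_eq /=.
by move/esym/(cips_coarsest c_in) => /= ->.
Qed.

Lemma cips_block_lt u c b : c \in cips u -> 1 < size c.1 -> b \in c.1 -> size b < size u.
Proof. by rewrite mem_cips => /and3P [/eqP <- nil_c _]; apply: size_block_lt. Qed.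

Definition cips_blocks (C : seq (word N)) : seq (seq (cip N)) :=
  foldr (fun b rs => [seq c :: r | c <- cips b, r <- rs]) [:: [::]] C.

Lemma mem_cips_blocks C r :
  (r \in cips_blocks C) = all2 (fun b c => c \in cips b) C r.
Proof.
elim: C r => [|b C IHC] [|c r] /=; rewrite ?inE //; first by apply/allpairsPdep => -[? [? []]].
apply/allpairsPdep/andP => [[c' [r' [c'_in r'_in [-> ->]]]]|[c_in r_in]].
  by rewrite -IHC.
by exists c, r; rewrite IHC.
Qed.

Lemma uniq_cips_blocks C : uniq (cips_blocks C).
Proof.
elim: C => [|b C IHC] //=; apply: allpairs_uniq_dep => [||[? ?] [? ?] _ _ [-> ->]] //.
exact: uniq_cips.
Qed.

Section CipsBlocks.
Variables (C : seq (word N)) (r : seq (cip N)).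
Hypothesis r_in : r \in cips_blocks C.

Lemma size_cips_blocks : size r = size C.
Proof.
move: r_in; rewrite mem_cips_blocks.
by elim: C r => [|b C' IHC] [|c r'] //= /andP [_ /IHC ->].
Qed.

Lemma cips_blocks_flatten : map (fun c => flatten c.1) r = C.
Proof.
move: r_in; rewrite mem_cips_blocks.
elim: C r => [|b C' IHC] [|c r'] //= /andP [+ /IHC ->].
by rewrite mem_cips => /and3P [/eqP ->].
Qed.

Lemma cips_blocks_shape : shape (map snd r) = shape (map fst r).
Proof.
move: r_in; rewrite mem_cips_blocks.
elim: C r => [|b C' IHC] [|c r'] //= /andP [+ /IHC ->].
by rewrite mem_cips => /and3P [_ _ /eqP ->].
Qed.

Lemma cips_blocks_nonempty : [::] \notin flatten (map fst r).
Proof.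
move: r_in; rewrite mem_cips_blocks.
elim: C r => [|b C' IHC] [|c r'] //= /andP [+ /IHC nil_r'].
by rewrite mem_cat negb_or nil_r' mem_cips => /and3P [_ ->].
Qed.

Lemma cips_blocks_colors_nonempty : [::] \notin C -> [::] \notin map snd r.
Proof.
move: r_in; rewrite mem_cips_blocks.
elim: C r => [|b C' IHC] [|c r'] //= /andP [c_in /IHC nil_r'].
rewrite !in_cons !negb_or => /andP [b_nil /nil_r' ->]; rewrite andbT eq_sym -size_eq0.
rewrite (cips_size_colors c_in) size_eq0; apply: contra b_nil => /eqP c_nil.
by move: c_in; rewrite mem_cips c_nil => /and3P [/eqP <-].
Qed.

End CipsBlocks.

Definition cips_pairs u : seq (cip N * cip N) :=
  [seq (c1, c2) | c1 <- cips u, c2 <- cips c1.2].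

Definition cips_refinements u : seq (cip N * seq (cip N)) :=
  [seq (c, r) | c <- cips u, r <- cips_blocks c.1].

(* A partition of u with a partition of each of its blocks is the same as a
   partition of u followed by a partition of its colouring: the combinatorics
   of the associativity of substitution. *)
Definition flatten_refinement (p : cip N * seq (cip N)) : cip N * cip N :=
  ((flatten (map fst p.2), flatten (map snd p.2)), (map snd p.2, p.1.2)).

Lemma mem_cips_pairs u p : (p \in cips_pairs u) = (p.1 \in cips u) && (p.2 \in cips p.1.2).
Proof.
case: p => c1 c2; apply/allpairsPdep/andP => [[? [? [? ? [-> ->]]]]|[c1_in c2_in]] //.
by exists c1, c2.
Qed.

Lemma mem_cips_refinements u p :
  (p \in cips_refinements u) = (p.1 \in cips u) && (p.2 \in cips_blocks p.1.1).
Proof.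
case: p => c r; apply/allpairsPdep/andP => [[? [? [? ? [-> ->]]]]|[c_in r_in]] //.
by exists c, r.
Qed.

Lemma flatten_refinement_in u p :
  p \in cips_refinements u -> flatten_refinement p \in cips_pairs u.
Proof.
rewrite mem_cips_refinements mem_cips_pairs; case: p => [[C w] r] /= /andP [c_in r_in].
move: (c_in); rewrite mem_cips /= => /and3P [/eqP flat_C nil_C /eqP size_w].
rewrite !mem_cips /= flatten_flatten -map_comp (cips_blocks_flatten r_in) flat_C eqxx /=.
rewrite (cips_blocks_nonempty r_in) (cips_blocks_colors_nonempty r_in nil_C) /=.
by rewrite !size_flatten (cips_blocks_shape r_in) size_map size_w (size_cips_blocks r_in) !eqxx.
Qed.

Lemma flatten_refinement_inj u : {in cips_refinements u &, injective flatten_refinement}.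
Proof.
move=> [[C w] r] [[C' w'] r']; rewrite !mem_cips_refinements /=.
move=> /andP [_ r_in] /andP [_ r'_in] [flat_fst _ snd_r w_eq].
have fst_r : map fst r = map fst r'.
  rewrite -(flattenK (map fst r)) -(flattenK (map fst r')).
  by rewrite -(cips_blocks_shape r_in) -(cips_blocks_shape r'_in) snd_r flat_fst.
have r_eq : r = r' by rewrite -(zip_unzip r) -(zip_unzip r'); congr zip.
by rewrite -(cips_blocks_flatten r_in) -(cips_blocks_flatten r'_in) r_eq w_eq.
Qed.

Lemma zip_in_cips_blocks (D : seq (seq (word N))) ys :
  shape D = shape ys -> all (fun bl => [::] \notin bl) D ->
  zip D ys \in cips_blocks (map flatten D).
Proof.
rewrite mem_cips_blocks; elim: D ys => [|bl D IHD] [|y' ys] //=.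
move=> [size_y' shape_D] /andP [nil_bl nil_D].
by rewrite IHD // andbT mem_cips eqxx nil_bl size_y' eqxx.
Qed.

Lemma flatten_refinement_onto u q :
  q \in cips_pairs u -> exists2 p, p \in cips_refinements u & q = flatten_refinement p.
Proof.
case: q => [[d y] [ys w]]; rewrite mem_cips_pairs /= !mem_cips /=.
case/andP => /and3P [/eqP flat_d nil_d /eqP size_y] /and3P [/eqP flat_ys nil_ys /eqP size_w].
pose D := reshape (shape ys) d.
have sum_ys : sumn (shape ys) = size d by rewrite -size_flatten flat_ys size_y.
have flat_D : flatten D = d by rewrite reshapeKr // sum_ys.
have shape_D : shape D = shape ys by rewrite reshapeKl // sum_ys.
have size_D : size D = size ys by rewrite size_reshape size_map.
have nil_D : all (fun bl => [::] \notin bl) D by rewrite -notin_flatten flat_D.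
have D_nil : [::] \notin D.
  apply/negP => /(map_f size) /=; rewrite -/(shape D) shape_D => /mapP [y' y'_in /esym/eqP].
  by rewrite size_eq0 => /eqP y'_nil; move: nil_ys; rewrite -y'_nil y'_in.
exists ((map flatten D, w), zip D ys); last first.
  have [fst_zip snd_zip] : map fst (zip D ys) = D /\ map snd (zip D ys) = ys.
    by split; [apply: unzip1_zip | apply: unzip2_zip]; rewrite size_D.
  by rewrite /flatten_refinement /= fst_zip snd_zip flat_D flat_ys.
rewrite mem_cips_refinements /= zip_in_cips_blocks // andbT mem_cips /=.
rewrite -flatten_flatten flat_D flat_d eqxx size_map size_D size_w eqxx andbT /=.
apply/mapP => -[bl bl_in /esym flat_bl]; move: (size_blocks_le (allP nil_D _ bl_in)).
by rewrite flat_bl leqn0 size_eq0 => /eqP bl_nil; move: D_nil; rewrite -bl_nil bl_in.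
Qed.

Lemma uniq_cips_pairs u : uniq (cips_pairs u).
Proof.
apply: allpairs_uniq_dep => [||[? ?] [? ?] _ _ [-> ->]] //; first exact: uniq_cips.
by move=> c _; apply: uniq_cips.
Qed.

Lemma uniq_cips_refinements u : uniq (cips_refinements u).
Proof.
apply: allpairs_uniq_dep => [||[? ?] [? ?] _ _ [-> ->]] //; first exact: uniq_cips.
by move=> c _; apply: uniq_cips_blocks.
Qed.

Lemma perm_flatten_refinement u :
  perm_eq (map flatten_refinement (cips_refinements u)) (cips_pairs u).
Proof.
apply: uniq_perm; rewrite ?uniq_cips_pairs //.
  by rewrite map_inj_in_uniq ?uniq_cips_refinements //; apply: flatten_refinement_inj.
move=> q; apply/mapP/idP => [[p p_in ->]|/flatten_refinement_onto [p p_in ->]].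
  exact: flatten_refinement_in.
by exists p.
Qed.

Definition rev_cip c : cip N := (rev (map (@rev _) c.1), rev c.2).

Lemma rev_cipK : involutive rev_cip.
Proof.
move=> [bl w]; rewrite /rev_cip /= !revK map_rev -map_comp revK.
by rewrite (eq_map (@revK _)) map_id.
Qed.

Lemma mem_rev_cip u c : (rev_cip c \in cips (rev u)) = (c \in cips u).
Proof.
case: c => bl w; rewrite !mem_cips /= -rev_flatten (inj_eq (can_inj (@revK _))).
by rewrite !size_rev size_map mem_rev (mem_map (can_inj (@revK _)) bl [::]).
Qed.

Lemma perm_cips_rev u : perm_eq (cips (rev u)) (map rev_cip (cips u)).
Proof.
have rev_cip_inj := can_inj rev_cipK.
apply: uniq_perm; rewrite ?uniq_cips ?map_inj_uniq ?uniq_cips //.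
by move=> c; rewrite -{1}(rev_cipK c) mem_rev_cip -{2}(rev_cipK c) mem_map.
Qed.

End ColoredIntervalPartitions.

Local Open Scope ring_scope.

Lemma sum_seq_delta (R : nmodType) (T : eqType) (r : seq T) (a : T) (F : T -> R) :
  uniq r -> a \in r -> \sum_(x <- r) F x *+ (x == a) = F a.
Proof.
move=> r_uniq a_in; rewrite (bigD1_seq a) //= eqxx mulr1n big1 ?addr0 //.
by move=> x /negbTE ->.
Qed.

Section Substitution.
Variables (N : nat) (A : pzRingType).
Implicit Types (F G K X Y : series N A) (i : 'I_N) (u w : word N) (c : cip N).

Lemma in_Gdif_nil F i : in_Gdif F -> F i [::] = 0.
Proof. by move/(_ i [::]) ->. Qed.

Lemma in_Gdif_letter F i x : in_Gdif F -> F i [:: x] = (x == i)%:R.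
Proof. by move/(_ i [:: x]) ->; rewrite // eqseq_cons andbT. Qed.

Lemma eq_subst F F' G G' :
  (forall i u, F i u = F' i u) -> (forall i u, G i u = G' i u) ->
  forall i u, subst F G i u = subst F' G' i u.
Proof.
move=> eqF eqG i u; apply: eq_bigr => c _; rewrite eqF; congr (_ * _).
by apply: eq_bigr => p _; rewrite eqG.
Qed.

Lemma prod_singletons K u y : in_Gdif K -> size y = size u ->
  \prod_(p <- zip y (singletons u)) K p.1 p.2 = (y == u)%:R.
Proof.
move=> GK; elim: u y => [|x u IHu] [|j y] //= => [_|[size_y]]; first by rewrite big_nil.
by rewrite big_cons /= IHu // in_Gdif_letter // eqseq_cons -natrM mulnb eq_sym.
Qed.

Lemma prod_id_series u c : c \in cips u ->
  \prod_(p <- zip c.2 c.1) id_series A p.1 p.2 = (c == (singletons u, u))%:R.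
Proof.
case: c => bl w; rewrite mem_cips /= => /and3P [/eqP <- _ /eqP size_w].
have -> : \prod_(p <- zip w bl) id_series A p.1 p.2 = (bl == singletons w)%:R.
  elim: bl w size_w => [|b bl IHbl] [|j w] //= => [_|[size_w]]; first by rewrite big_nil.
  by rewrite big_cons IHbl // /id_series eqseq_cons -natrM mulnb.
rewrite xpair_eqE; congr (nat_of_bool _)%:R.
apply/eqP/andP => [bl_eq|[/eqP bl_eq /eqP w_eq]]; last by rewrite w_eq.
by rewrite bl_eq /singletons flatten_seq1 !eqxx.
Qed.

Lemma subst_coarsest F X i u : in_Gdif F -> u != [::] ->
  subst F X i u = X i u + \sum_(c <- cips u | (1 < size c.1)%N)
                             F i c.2 * \prod_(p <- zip c.2 c.1) X p.1 p.2.
Proof.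
move=> GF u_nil; rewrite /subst (bigID (fun c => (1 < size c.1)%N)) addrC /=; congr (_ + _).
rewrite big_mkcond; transitivity (\sum_(c <- cips u) X i u *+ (c == ([:: u], [:: i])));
  last exact: sum_seq_delta (uniq_cips u) (whole_in_cips i u_nil).
apply: eq_big_seq => c c_in; case: ltnP => [blocks_gt1|blocks_le1].
  by case: eqP blocks_gt1 => // ->.
have /(cips_coarsest c_in) bl_eq : size c.1 = 1%N.
  apply/anti_leq; rewrite blocks_le1 lt0n size_eq0; apply: contra u_nil => /eqP bl_nil.
  by move: c_in; rewrite mem_cips bl_nil => /and3P [/eqP <-].
case: c bl_eq c_in {blocks_le1} => bl w /= -> c_in.
have [j ->] : exists j, w = [:: j].
  by case: w c_in => [|j [|? ?]] /cips_size_colors //= _; exists j.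
rewrite big_seq1 in_Gdif_letter // xpair_eqE eqxx eqseq_cons andbT eq_sym mulr_natl.
by case: eqP => [->|].
Qed.

Lemma subst_finest X F i u : in_Gdif F ->
  subst X F i u = X i u + \sum_(c <- cips u | (size c.1 < size u)%N)
                             X i c.2 * \prod_(p <- zip c.2 c.1) F p.1 p.2.
Proof.
move=> GF; rewrite /subst (bigID (fun c => (size c.1 < size u)%N)) addrC /=; congr (_ + _).
rewrite big_mkcond; transitivity (\sum_(c <- cips u) X i u *+ (c == (singletons u, u)));
  last exact: sum_seq_delta (uniq_cips u) (singletons_in_cips u).
apply: eq_big_seq => c c_in; case: ltnP => [blocks_lt|/(cips_finest c_in) bl_eq].
  by case: eqP blocks_lt => // ->; rewrite /singletons size_map ltnn.
rewrite bl_eq prod_singletons //; last by rewrite (cips_size_colors c_in) bl_eq size_map.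
case: c bl_eq {c_in} => bl w /= ->; rewrite xpair_eqE eqxx /=.
by case: eqP => [->|_]; rewrite ?mulr1 ?mulr0.
Qed.

Lemma right_inverse_unique F X Y : in_Gdif F -> in_Gdif X -> in_Gdif Y ->
  (forall i u, subst F X i u = id_series A i u) ->
  (forall i u, subst F Y i u = id_series A i u) ->
  forall i u, X i u = Y i u.
Proof.
move=> GF GX GY FX FY i u; have [n] := ubnP (size u); elim: n u i => // n IHn u i size_u.
have [u_le1|u_gt1] := leqP (size u) 1; first by rewrite GX // GY.
have u_nil : u != [::] by case: u u_gt1 {size_u}.
move: (FX i u) (FY i u); rewrite !subst_coarsest // => /(canRL (addrK _)) -> /(canRL (addrK _)) ->.
congr (_ - _); rewrite big_seq_cond [RHS]big_seq_cond.
apply: eq_bigr => c /andP [c_in blocks_gt1]; congr (_ * _).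
apply: eq_big_seq => p /mem_zip_snd p_in; apply: IHn.
exact: leq_trans (cips_block_lt c_in blocks_gt1 p_in) size_u.
Qed.

Lemma left_inverse_unique F X Y : in_Gdif F ->
  (forall i u, subst X F i u = id_series A i u) ->
  (forall i u, subst Y F i u = id_series A i u) ->
  forall i u, X i u = Y i u.
Proof.
move=> GF XF YF i u; have [n] := ubnP (size u); elim: n u i => // n IHn u i size_u.
move: (XF i u) (YF i u); rewrite !subst_finest // => /(canRL (addrK _)) -> /(canRL (addrK _)) ->.
congr (_ - _); rewrite big_seq_cond [RHS]big_seq_cond.
apply: eq_bigr => c /andP [c_in blocks_lt]; congr (_ * _); apply: IHn.
by rewrite (cips_size_colors c_in) (leq_trans blocks_lt).
Qed.

Definition rev_series F : series N A := fun i u => F i (rev u).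

Lemma in_Gdif_rev_series F : in_Gdif F -> in_Gdif (rev_series F).
Proof. by move=> GF i u u_le1; rewrite /rev_series GF ?size_rev //; case: u u_le1 => [|? []]. Qed.

Lemma subst_rev_series X Y i u :
  subst (rev_series X) (rev_series Y) i u =
  \sum_(c <- cips (rev u)) X i c.2 * \prod_(p <- rev (zip c.2 c.1)) Y p.1 p.2.
Proof.
have := perm_cips_rev (rev u); rewrite revK => perm_u.
rewrite /subst (perm_big _ perm_u) big_map; apply: eq_big_seq => c c_in.
rewrite /rev_cip /rev_series /= revK -rev_zip; last by rewrite size_map (cips_size_colors c_in).
by rewrite zip_mapr -map_rev big_map; congr (_ * _); apply: eq_bigr => p _; rewrite /= revK.
Qed.

Section ReversedRightInverse.
Variables F G : series N A.
Hypotheses (GF : in_Gdif F) (GG : in_Gdif G).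
Hypothesis FG : forall i u, subst F G i u = id_series A i u.

Let reversed_subst i u :=
  \sum_(c <- cips u) G i c.2 * \prod_(p <- rev (zip c.2 c.1)) F p.1 p.2.

Let nested_term i (q : cip N * cip N) :=
  G i q.2.2 * \prod_(p <- rev (zip q.2.2 q.2.1)) F p.1 p.2 *
  \prod_(p <- zip q.1.2 q.1.1) G p.1 p.2.

(* Summing over the partitions of the first block first produces the
   coefficient (F o G)_{w_1}(C_1), a central 0 or 1; this is why the reversed
   order of the F-factors does no harm. *)
Lemma sum_cips_blocks_nested C w : size w = size C ->
  \sum_(r <- cips_blocks C)
     (\prod_(p <- rev (zip w (map snd r))) F p.1 p.2) *
     (\prod_(p <- zip (flatten (map snd r)) (flatten (map fst r))) G p.1 p.2)
  = \prod_(p <- zip w C) id_series A p.1 p.2.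
Proof.
elim: C w => [|b C IHC] [|j w] // => [_|[size_w]]; first by rewrite big_seq1 !big_nil mulr1.
pose P (r : seq (cip N)) := \prod_(p <- rev (zip w (map snd r))) F p.1 p.2.
pose Q (r : seq (cip N)) := \prod_(p <- zip (flatten (map snd r)) (flatten (map fst r))) G p.1 p.2.
rewrite big_allpairs_dep big_cons /=.
transitivity (\sum_(c <- cips b) \sum_(r <- cips_blocks C)
                P r * (F j c.2 * \prod_(p <- zip c.2 c.1) G p.1 p.2) * Q r).
  apply: eq_big_seq => c c_in; apply: eq_bigr => r _.
  by rewrite rev_cons big_rcons zip_cat ?big_cat ?(cips_size_colors c_in) //= !mulrA.
rewrite exchange_big /=; transitivity (\sum_(r <- cips_blocks C) P r * id_series A j b * Q r).
  by apply: eq_bigr => r _; rewrite -big_distrl -big_distrr -(FG j b).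
rewrite -IHC // big_distrr; apply: eq_bigr => r _.
by rewrite /id_series /= mulr_natr mulr_natl mulrnAl.
Qed.

Lemma nested_sum_regroup i u : \sum_(q <- cips_pairs u) nested_term i q = G i u.
Proof.
rewrite -(perm_big _ (perm_flatten_refinement u)) big_map big_allpairs_dep /=.
transitivity (\sum_(c <- cips u) G i c.2 *+ (c == (singletons u, u)));
  last exact: sum_seq_delta (uniq_cips u) (singletons_in_cips u).
apply: eq_big_seq => c c_in; under eq_bigr => r _ do rewrite /nested_term /= -mulrA.
rewrite -big_distrr sum_cips_blocks_nested ?(cips_size_colors c_in) //.
by rewrite (prod_id_series c_in) /= mulr_natr.
Qed.

Lemma nested_sum_expand i u : (1 < size u)%N ->
  (forall j v, (size v < size u)%N -> reversed_subst j v = (v == [:: j])%:R) ->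
  \sum_(q <- cips_pairs u) nested_term i q = reversed_subst i u + G i u.
Proof.
move=> u_gt1 IHu; rewrite big_allpairs_dep /=.
transitivity (\sum_(c <- cips u) (reversed_subst i u *+ (c == (singletons u, u)) +
                                  G i u *+ (c == ([:: u], [:: i])))); last first.
  have u_nil : u != [::] by rewrite -size_eq0 -lt0n ltnW.
  by rewrite big_split !sum_seq_delta ?uniq_cips ?singletons_in_cips ?whole_in_cips.
apply: eq_big_seq => c c_in; rewrite /nested_term /= -big_distrl -/(reversed_subst i c.2).
have [lt_u|/(cips_finest c_in) c1_eq] := ltnP (size c.1) (size u).
  have -> : (c == (singletons u, u)) = false.
    by apply: contraTF lt_u => /eqP ->; rewrite /singletons size_map ltnn.
  rewrite IHu ?(cips_size_colors c_in) // mulr0n add0r.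
  have [c2_eq|c2_neq] := eqVneq c.2 [:: i].
    by rewrite (cips_one_color c_in c2_eq) /= !eqxx big_seq1 mul1r.
  have -> : (c == ([:: u], [:: i])) = false by apply: contraNF c2_neq => /eqP ->.
  by rewrite /= mul0r.
have -> : (c == ([:: u], [:: i])) = false.
  apply: contraTF u_gt1 => /eqP c_eq; move: c1_eq; rewrite c_eq => /(congr1 size).
  by rewrite size_map => <-.
rewrite c1_eq prod_singletons ?(cips_size_colors c_in) ?c1_eq ?size_map // addr0.
case: c c1_eq {c_in} => bl w /= ->; rewrite xpair_eqE eqxx /=.
by case: eqP => [->|_]; rewrite ?mulr1 ?mulr0.
Qed.

Lemma reversed_subst_id i u : reversed_subst i u = (u == [:: i])%:R.
Proof.
have [n] := ubnP (size u); elim: n u i => // n IHn u i size_u.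
rewrite /reversed_subst; case: u size_u => [|x [|y u]] size_u.
- by rewrite big_seq1 /= in_Gdif_nil // mul0r.
- have -> : cips [:: x] = [seq ([:: [:: x]], [:: j]) | j <- ord_enum N].
    by rewrite /cips /= cats0 flatten_map1 -map_comp.
  rewrite big_map.
  under eq_bigr => j _ do rewrite /= big_seq1 /= !in_Gdif_letter // mulr_natl.
  by rewrite sum_seq_delta ?ord_enum_uniq ?mem_ord_enum // eqseq_cons andbT.
have := nested_sum_regroup i [:: x, y & u]; rewrite nested_sum_expand // => [|j v v_lt].
  by move/(canRL (addrK _)); rewrite subrr eqseq_cons andbF.
by apply: IHn; rewrite (leq_trans v_lt) // -ltnS.
Qed.

Lemma subst_rev_series_inverse i u :
  subst (rev_series G) (rev_series F) i u = id_series A i u.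
Proof.
rewrite subst_rev_series -/(reversed_subst i (rev u)) reversed_subst_id /id_series.
by rewrite (can2_eq (@revK _) (@revK _)).
Qed.

End ReversedRightInverse.

End Substitution.

Section LagrangeAntipodes.
Variables (N : nat) (A : pzRingType).
Implicit Types (F : series N A) (X Z : H N) (i : 'I_N) (u : word N).

Definition pairing_t X F : A := pairing (t_map X) F.

Lemma pairing_t_flatten F (Xs : seq (H N)) :
  pairing_t (flatten Xs) F = \sum_(X <- Xs) pairing_t X F.
Proof.
rewrite /pairing_t /pairing /t_map map_flatten big_flatten /= big_map.
by apply: eq_bigr => X _; rewrite big_map.
Qed.

Lemma pairing_t_opp F X : pairing_t (Hopp X) F = - pairing_t X F.
Proof.
rewrite /pairing_t /pairing /t_map /Hopp -map_comp !big_map -sumrN.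
by apply: eq_bigr => m _; rewrite mulrNz.
Qed.

Lemma pairing_t_mul F X Z : pairing_t (Hmul X Z) F = pairing_t Z F * pairing_t X F.
Proof.
rewrite /pairing_t /pairing /t_map /Hmul !big_map big_allpairs_dep /= exchange_big /= big_distrl.
apply: eq_bigr => n _; rewrite big_distrr; apply: eq_bigr => m _ /=.
by rewrite rev_cat big_cat mulrzA mulrzAl mulrzAr.
Qed.

Lemma pairing_t_prod F (Xs : seq (H N)) :
  pairing_t (Hprod Xs) F = \prod_(X <- rev Xs) pairing_t X F.
Proof.
elim: Xs => [|X Xs IHXs]; first by rewrite /pairing_t /pairing big_seq1 /= !big_nil mulr1z.
by rewrite /= pairing_t_mul IHXs rev_cons big_rcons.
Qed.

Lemma pairing_t_Y F i u : pairing_t (Y i u) F = F i u.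
Proof. by rewrite /pairing_t /pairing !big_seq1 mulr1z. Qed.

Lemma pairing_t_one F : pairing_t (Hone N) F = 1.
Proof. by rewrite /pairing_t /pairing big_seq1 /= big_nil mulr1z. Qed.

Lemma Sgen_enough_fuel n m i u : (size u <= n <= m)%N -> Sgen m i u = Sgen n i u.
Proof.
elim: n m i u => [|n IHn] [|m] i u /andP [u_le n_le] //=; first by rewrite (leq_trans u_le).
case: ifP => // _; congr Hopp; congr flatten; apply/eq_in_map => c.
rewrite mem_filter => /andP [blocks_gt1 c_in]; congr Hmul; congr Hprod; congr rev.
apply/eq_in_map => p /mem_zip_snd p_in; apply: IHn; apply/andP; split => //.
by rewrite -ltnS (leq_trans (cips_block_lt c_in blocks_gt1 p_in)).
Qed.

Lemma S_gen_rec i u : (1 < size u)%N ->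
  S_gen (i, u) = Hopp (flatten
    [seq Hmul (Hprod (rev (map (@S_gen N) (zip c.2 c.1)))) (Y i c.2)
    | c : cip N <- cips u & (1 < size c.1)%N]).
Proof.
rewrite /S_gen /=; case size_u: (size u) => [|k] //= k_gt0.
rewrite size_u ifN -?ltnNge //.
congr Hopp; congr flatten; apply/eq_in_map => c.
rewrite mem_filter => /andP [blocks_gt1 c_in]; congr Hmul; congr Hprod; congr rev.
apply/eq_in_map => p /mem_zip_snd p_in; apply: Sgen_enough_fuel; rewrite leqnn -ltnS -size_u.
exact: cips_block_lt c_in blocks_gt1 p_in.
Qed.

Lemma right_invE F : in_Gdif F -> forall i u, right_inv F i u = pairing_t (S_gen (i, u)) F.
Proof.
move=> GF i u; rewrite /right_inv; case: ifP => [_|/negbT].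
  by rewrite /S_R /S_H /= cats0 -/(pairing_t _ F) !pairing_t_mul !pairing_t_one mul1r mulr1.
rewrite -ltnNge ltnS => u_le1; rewrite -GF //.
by case: u u_le1 => [|x []] //= _; rewrite pairing_t_Y.
Qed.

Lemma right_inv_rec F i u : in_Gdif F -> (1 < size u)%N ->
  right_inv F i u = - \sum_(c <- cips u | (1 < size c.1)%N)
                        F i c.2 * \prod_(p <- zip c.2 c.1) right_inv F p.1 p.2.
Proof.
move=> GF u_gt1; rewrite right_invE // S_gen_rec // pairing_t_opp pairing_t_flatten.
rewrite big_map big_filter; congr (- _); apply: eq_bigr => c _.
rewrite pairing_t_mul pairing_t_Y pairing_t_prod revK big_map; congr (_ * _).
by apply: eq_bigr => p _; rewrite right_invE.
Qed.

Lemma in_Gdif_right_inv F : in_Gdif (right_inv F).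
Proof. by move=> i u u_le1; rewrite /right_inv ltnNge u_le1. Qed.

Lemma subst_right_inv F : in_Gdif F ->
  forall i u, subst F (right_inv F) i u = id_series A i u.
Proof.
move=> GF i u; have [->|u_nil] := eqVneq u [::].
  by rewrite /subst /cips big_seq1 /= in_Gdif_nil // mul0r.
rewrite subst_coarsest //; have [u_le1|u_gt1] := leqP (size u) 1.
  rewrite big_seq_cond big1 ?addr0 ?in_Gdif_right_inv // => c /andP [c_in blocks_gt1].
  by move: (leq_trans (cips_size_blocks c_in) u_le1); rewrite leqNgt blocks_gt1.
rewrite right_inv_rec // addNr /id_series.
by case: u u_gt1 {u_nil} => [|x [|y u]] //; rewrite eqseq_cons andbF.
Qed.

Lemma pairing_s_map F X : pairing (s_map X) F = pairing_t X (rev_series F).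
Proof.
rewrite /pairing_t /pairing /s_map /t_map !big_map; apply: eq_bigr => m _ /=.
by rewrite -map_rev big_map.
Qed.

Lemma left_inv_rev_series F i u : left_inv F i u = rev_series (right_inv (rev_series F)) i u.
Proof.
rewrite /left_inv /rev_series /right_inv size_rev; case: ifP => [_|/negbT].
  by rewrite /S_L pairing_s_map.
by rewrite -ltnNge ltnS; case: u => [|x []].
Qed.

End LagrangeAntipodes.

Theorem theorem11 (N : nat) (A : pzRingType) (F : series N A) :
  in_Gdif F ->
  (* G := left_inv F (g_v^j = <S_L(Y_v^j),F>) is the left substitutional
     inverse: G o F = (z_1,...,z_N), and it is the unique such series *)
  ((forall i u, subst (left_inv F) F i u = id_series A i u) /\
   (forall G : series N A, in_Gdif G ->
      (forall i u, subst G F i u = id_series A i u) ->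
      forall i u, G i u = left_inv F i u)) /\
  (* H := right_inv F (h_v^j = <S_R(Y_v^j),F>) is the right substitutional
     inverse: F o H = (z_1,...,z_N), and it is the unique such series *)
  ((forall i u, subst F (right_inv F) i u = id_series A i u) /\
   (forall Hs : series N A, in_Gdif Hs ->
      (forall i u, subst F Hs i u = id_series A i u) ->
      forall i u, Hs i u = right_inv F i u)).
Proof.
move=> GF; have GFrev := in_Gdif_rev_series GF.
have left_invP : forall i u, subst (left_inv F) F i u = id_series A i u.
  move=> i u; have FrevR := subst_right_inv GFrev.
  rewrite -(subst_rev_series_inverse GFrev (in_Gdif_right_inv _) FrevR).
  apply: eq_subst => j v; first exact: left_inv_rev_series.
  by rewrite /rev_series revK.
split; split.
- exact: left_invP.
- by move=> G _ GF_id; apply: left_inverse_unique GF GF_id left_invP.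
- exact: subst_right_inv.
- move=> Hs GHs FHs.
  exact: right_inverse_unique GF GHs (in_Gdif_right_inv F) FHs (subst_right_inv GF).
Qed.
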